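(* For every $n \in \mathbb{N}$, the SquaredEquality formula $EQ^2(n)$ has a QRAT refutation of size $\mathcal{O}(n^2)$.
   Context: A QBF is in closed prenex CNF form $Q.\phi$, where $Q = Q_1X_1\dots Q_kX_k$ is a quantifier prefix with $Q_i\in\{\exists,\forall\}$ and $\phi$ is a CNF (a set of clauses, each a disjunction of literals). For literals $\ell,k$, write $k \le_Q \ell$ if the variable of $k$ is quantified in a block at or to the left of the block of $\ell$. The $n$-th SquaredEquality formula is $EQ^2(n) := Q(n).eq^2(n)$ with prefix $Q(n) := \exists\{x_1,y_1,\dots,x_n,y_n\}\,\forall\{u_1,v_1,\dots,u_n,v_n\}\,\exists\{t_{i,j} : i,j\in[n]\}$ and matrix $eq^2(n)$ consisting of the clauses $\{x_i,y_j,u_i,v_j,t_{i,j}\}$, $\{x_i,\overline{y_j},u_i,\overline{v_j},t_{i,j}\}$, $\{\overline{x_i},y_j,\overline{u_i},v_j,t_{i,j}\}$, $\{\overline{x_i},\overline{y_j},\overline{u_i},\overline{v_j},t_{i,j}\}$ for all $i,j\in[n]$, together with the single clause $(\overline{t_{i,j}} : i,j\in[n])$ (the disjunction of all $\overline{t_{i,j}}$). QRAT proof system. Unit propagation on a CNF $F$: repeatedly, for a unit clause $(\ell)$, remove all clauses containing $\ell$ and delete $\overline{\ell}$ from all clauses, until no unit clause remains or the empty clause is derived. A clause $C$ is an asymmetric tautology (AT) w.r.t. $\phi$ (and w.r.t. $Q.\phi$) if unit propagation on $\phi \wedge \overline{C}$ (where $\overline{C}$ is the conjunction of the negations of the literals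 of $C$) derives the empty clause. For clauses $C\vee\ell$ and $D\vee\overline{\ell}$, the outer resolvent is $OR(Q,C,D,\ell) := C \cup \{k \in D : k \le_Q \ell\}$. A clause $C\vee \ell$ is a QRAT-clause on literal $\ell$ (and $\ell$ is a QRAT-literal in it) w.r.t. $Q.\phi$ if for every clause $D\vee\overline{\ell}\in\phi$ the outer resolvent $OR(Q,C,D,\ell)$ is an AT w.r.t. $\phi$. Extended inner clause $EIC(Q,C,\ell)$ for a universal $\ell\in C\in\phi$: repeatedly, for every existential literal $k$ of the current clause quantified to the right of $\ell$, add to the clause all literals quantified to the right of $\ell$ (and $\overline{\ell}$ if present) occurring in clauses $D\in\phi$ with $\overline{k}\in D$. A QRAT derivation from $Q.\phi$ is a sequence of modifications of the current formula, each being one of: adding a clause that is an AT or has an existential QRAT-literal w.r.t. the current formula (QRATA); deleting any clause; deleting a universal literal $\ell$ from a clause $C$ when $\ell$ is a QRAT-literal in $C$ (QRATU); deleting a universal literal $\ell$ from a clause $C$ when $\overline{\ell}\notin EIC(Q,C,\ell)$ (EUR). A QRAT refutation is such a derivation that produces the empty clause $\bot$; its size is the number of steps (equivalently, total size of the clauses produced). *)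

From mathcomp Require Import all_boot.
Set Implicit Arguments. Unset Strict Implicit. Unset Printing Implicit Defensive.

Section QRAT.
Variable V : eqType.

(* A literal is a variable together with a polarity (true = positive). *)
Definition lit := (V * bool)%type.
Definition lvar (l : lit) : V := l.1.
Definition negl (l : lit) : lit := (l.1, ~~ l.2).
Definition clause := seq lit.
Definition cnf := seq clause.

(* A quantifier prefix: a list of blocks (Q_i, X_i), with Q_i = true for
   an existential block and false for a universal block; leftmost first. *)
Definition prefix := seq (bool * seq V).

Definition level (Q : prefix) (v : V) : nat := find (fun b => v \in b.2) Q.
Definition bound (Q : prefix) (v : V) : bool := level Q v < size Q.
Definition is_exist (Q : prefix) (v : V) : bool :=
  bound Q v && (nth (false, [::]) Q (level Q v)).1.
Definition is_univ (Q : prefix) (v : V) : bool :=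
  bound Q v && ~~ (nth (false, [::]) Q (level Q v)).1.

Definition leQ (Q : prefix) (k l : lit) : bool :=
  [&& bound Q (lvar k), bound Q (lvar l) & level Q (lvar k) <= level Q (lvar l)].
Definition rightQ (Q : prefix) (k l : lit) : bool :=
  [&& bound Q (lvar k), bound Q (lvar l) & level Q (lvar l) < level Q (lvar k)].

Definition simplify (F : cnf) (l : lit) : cnf :=
  [seq [seq m <- C | m != negl l] | C <- F & l \notin C].

Inductive up_conflict : cnf -> Prop :=
| up_empty F : [::] \in F -> up_conflict F
| up_unit F l : [:: l] \in F -> up_conflict (simplify F l) -> up_conflict F.

Definition AT (F : cnf) (C : clause) : Prop :=
  up_conflict ([seq [:: negl m] | m <- C] ++ F).

(* Outer resolvent of (C \/ l) (given as the full clause E) and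
   (D \/ ~l) (given as the full clause G) on l. *)
Definition outer_resolvent (Q : prefix) (E G : clause) (l : lit) : clause :=
  [seq m <- E | m != l] ++ [seq k <- G | (k != negl l) && leQ Q k l].

Definition QRAT_lit (Q : prefix) (F : cnf) (E : clause) (l : lit) : Prop :=
  l \in E /\
  forall G, G \in F -> negl l \in G -> AT F (outer_resolvent Q E G l).

Inductive in_EIC (Q : prefix) (F : cnf) (E : clause) (l : lit) : lit -> Prop :=
| EIC_base m : m \in E -> in_EIC Q F E l m
| EIC_step k G m : in_EIC Q F E l k -> is_exist Q (lvar k) -> rightQ Q k l ->
    G \in F -> negl k \in G -> m \in G -> rightQ Q m l || (m == negl l) ->
    in_EIC Q F E l m.

Inductive qrat_step (Q : prefix) : cnf -> cnf -> Prop :=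
| step_ATA F C : AT F C -> qrat_step Q F (C :: F)
| step_QRATA F C l : is_exist Q (lvar l) -> QRAT_lit Q F C l ->
    qrat_step Q F (C :: F)
| step_del F1 C F2 : qrat_step Q (F1 ++ C :: F2) (F1 ++ F2)
| step_QRATU F1 C F2 l : is_univ Q (lvar l) -> QRAT_lit Q (F1 ++ C :: F2) C l ->
    qrat_step Q (F1 ++ C :: F2) (F1 ++ [seq m <- C | m != l] :: F2)
| step_EUR F1 C F2 l : l \in C -> is_univ Q (lvar l) ->
    ~ in_EIC Q (F1 ++ C :: F2) C l (negl l) ->
    qrat_step Q (F1 ++ C :: F2) (F1 ++ [seq m <- C | m != l] :: F2).

Inductive qrat_derivation (Q : prefix) : cnf -> cnf -> nat -> Prop :=
| deriv_nil F : qrat_derivation Q F F 0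
| deriv_cons F F' F'' k : qrat_step Q F F' -> qrat_derivation Q F' F'' k ->
    qrat_derivation Q F F'' k.+1.

Definition qrat_refutation (Q : prefix) (F : cnf) (k : nat) : Prop :=
  exists F', qrat_derivation Q F F' k /\ [::] \in F'.

End QRAT.

Definition eqvar := (nat * nat * nat)%type.
Definition vx (i : nat) : eqvar := (0, i, 0).
Definition vy (j : nat) : eqvar := (1, j, 0).
Definition vu (i : nat) : eqvar := (2, i, 0).
Definition vv (j : nat) : eqvar := (3, j, 0).
Definition vt (i j : nat) : eqvar := (4, i, j).

Definition pos (v : eqvar) : lit eqvar := (v, true).
Definition ngt (v : eqvar) : lit eqvar := (v, false).

Definition idx (n : nat) : seq nat := iota 1 n.

Definition Q2 (n : nat) : prefix eqvar :=
  [:: (true, flatten [seq [:: vx i; vy i] | i <- idx n]);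
      (false, flatten [seq [:: vu i; vv i] | i <- idx n]);
      (true, [seq vt i j | i <- idx n, j <- idx n])].

Definition eq2_clauses (i j : nat) : cnf eqvar :=
  [:: [:: pos (vx i); pos (vy j); pos (vu i); pos (vv j); pos (vt i j)];
      [:: pos (vx i); ngt (vy j); pos (vu i); ngt (vv j); pos (vt i j)];
      [:: ngt (vx i); pos (vy j); ngt (vu i); pos (vv j); pos (vt i j)];
      [:: ngt (vx i); ngt (vy j); ngt (vu i); ngt (vv j); pos (vt i j)]].

Definition eq2 (n : nat) : cnf eqvar :=
  flatten [seq eq2_clauses i j | i <- idx n, j <- idx n] ++
  [:: [seq ngt (vt i j) | i <- idx n, j <- idx n]].

From Pilot Require Import Defs.
From mathcomp Require Import all_boot zify.
Set Implicit Arguments. Unset Strict Implicit. Unset Printing Implicit Defensive.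

(* In every clause of EQ^2(n) the universal literal u_i (resp. v_j) occurs together with
   the literal of x_i (resp. y_j) of the same polarity, quantified further left.  The outer
   resolvent on u_i therefore contains x_i and its negation, so QRATU deletes all universal
   literals, in at most 21 n^2 steps.  For each i, j the four remaining clauses over x_i,
   y_j, t_ij yield the unit t_ij by three AT additions, and these n^2 units falsify the
   clause of all negated t_ij, so the empty clause is an AT: 24 n^2 + 1 steps in all. *)

Section UnitPropagation.
Variable V : eqType.
Implicit Types (F G : cnf V) (C D : clause V) (a b c l m : lit V).

Lemma neglK : involutive (@negl V).
Proof. by case=> v p; rewrite /negl negbK. Qed.

Lemma negl_neq l : negl l != l.
Proof. by case: l => v []; rewrite /negl xpair_eqE eqxx. Qed.

Lemma filter_lvar_notin l D :
  lvar l \notin map (@lvar V) D -> [seq m <- D | m != l] = D.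
Proof. by move=> lD; apply/all_filterP/allP => m mD; apply: contraNneq lD => <-; apply: map_f. Qed.

Lemma notin_lvar_notin l D : lvar l \notin map (@lvar V) D -> l \notin D.
Proof. by apply: contra => /(map_f (@lvar V)). Qed.

Lemma mem_simplify F l D :
  D \in F -> l \notin D -> [seq m <- D | m != negl l] \in simplify F l.
Proof. by move=> DF lD; apply: map_f; rewrite mem_filter lD. Qed.

Lemma mem_simplify_lvar F l D :
  D \in F -> lvar l \notin map (@lvar V) D -> D \in simplify F l.
Proof.
move=> DF lD; rewrite -[D in D \in _](filter_lvar_notin (l := negl l)) //.
exact: mem_simplify (notin_lvar_notin lD).
Qed.

Lemma mem_simplify_falsified F a D1 D2 :
  D1 ++ a :: D2 \in F -> lvar a \notin map (@lvar V) (D1 ++ D2) ->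
  D1 ++ D2 \in simplify F (negl a).
Proof.
move=> DF; rewrite map_cat mem_cat negb_or => /andP [aD1 aD2].
have -> : D1 ++ D2 = [seq m <- D1 ++ a :: D2 | m != negl (negl a)].
  by rewrite neglK filter_cat /= eqxx !filter_lvar_notin.
apply: mem_simplify DF _; rewrite mem_cat inE (negbTE (negl_neq _)) /=.
by rewrite negb_or !(notin_lvar_notin (l := negl a)).
Qed.

Lemma up_conflict_subset F G : up_conflict F -> {subset F <= G} -> up_conflict G.
Proof.
move=> up; move: G; elim: up => {F} [F e | F l u _ IH] G sub; first exact/up_empty/sub.
apply: (up_unit (l := l)); first exact: sub.
apply: IH => E /mapP [D]; rewrite mem_filter => /andP [lD DF] ->.
by apply: map_f; rewrite mem_filter lD sub.
Qed.

Lemma up_complementary F l : [:: l] \in F -> [:: negl l] \in F -> up_conflict F.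
Proof.
move=> lF nlF; apply: (up_unit lF); apply: up_empty.
have := mem_simplify nlF (l := l); rewrite /= eqxx; apply.
by rewrite inE eq_sym negl_neq.
Qed.

Lemma up_falsified F D : D \in F -> {in D, forall m, [:: negl m] \in F} -> up_conflict F.
Proof.
have [s] := ubnP (size D); elim: s F D => // s IH F [|m D] /= lt_Ds DF units.
  exact: up_empty.
have mF : [:: negl m] \in F by apply: units; rewrite mem_head.
have [nmD | nmD] := boolP (negl m \in D).
  by apply: (up_complementary mF); apply: units; rewrite inE nmD orbT.
apply: (up_unit mF); apply: (IH _ [seq k <- D | k != m]).
- by rewrite size_filter (leq_ltn_trans (count_size _ _)).
- have := mem_simplify DF (l := negl m); rewrite neglK /= eqxx; apply.
  by rewrite inE negb_or negl_neq.
- move=> k; rewrite mem_filter => /andP [km kD].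
  have kF : [:: negl k] \in F by apply: units; rewrite inE kD orbT.
  have := mem_simplify kF (l := negl m); rewrite neglK /=.
  have -> : (negl k != m) by apply: contraNneq nmD => <-; rewrite neglK.
  by apply; rewrite inE (inj_eq (can_inj neglK)) eq_sym.
Qed.

Lemma AT_tautology F C m : m \in C -> negl m \in C -> AT F C.
Proof.
move=> mC nmC; apply: (up_complementary (l := negl m)); rewrite mem_cat.
  by rewrite (map_f (fun k => [:: negl k]) mC).
by rewrite (map_f (fun k => [:: negl k]) nmC).
Qed.

Lemma AT_resolvent_unit F a c :
  uniq [:: lvar a; lvar c] -> [:: a; c] \in F -> [:: negl a; c] \in F -> AT F [:: c].
Proof.
rewrite /= inE andbT eq_sym => ca acF nacF.
apply: (up_unit (l := negl c)); first exact: mem_head.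
by apply: (up_complementary (l := a));
  apply: (mem_simplify_falsified (D1 := [:: _])); rewrite ?inE ?acF ?nacF ?orbT.
Qed.

Lemma AT_resolvent_binary F a b c :
  uniq [:: lvar a; lvar b; lvar c] -> [:: a; b; c] \in F -> [:: a; negl b; c] \in F ->
  AT F [:: a; c].
Proof.
move=> /= /andP [a_bc bc] abcF anbcF.
apply: (up_unit (l := negl a)); first exact: mem_head.
have mem_red D : a :: D \in F -> map (@lvar V) D = [:: lvar b; lvar c] ->
    D \in simplify ([:: [:: negl a]; [:: negl c]] ++ F) (negl a).
  move=> aDF eD; apply: (mem_simplify_falsified (D1 := [::])).
    by rewrite mem_cat aDF orbT.
  by rewrite /= eD.
apply: up_conflict_subset (AT_resolvent_unit bc (mem_red _ abcF erefl) (mem_red _ anbcF erefl)) _.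
move=> D; rewrite inE => /orP [/eqP -> | //]; apply: mem_simplify_lvar.
  by rewrite !inE eqxx orbT.
by move: a_bc; rewrite /= !inE !negb_or => /andP [_ ->].
Qed.

End UnitPropagation.

Section Derivations.
Variables (V : eqType) (Q : Defs.prefix V).
Implicit Types (F : cnf V) (C : clause V) (a b c : lit V).

Lemma qrat_derivation_cat F1 F2 F3 k1 k2 :
  qrat_derivation Q F1 F2 k1 -> qrat_derivation Q F2 F3 k2 ->
  qrat_derivation Q F1 F3 (k1 + k2).
Proof.
elim=> {F1 F2 k1} [// | F1 F2 F2' k1 s _ IH] d.
by rewrite addSn; apply: deriv_cons s (IH d).
Qed.

Lemma qrat_derivation_AT F C : AT F C -> qrat_derivation Q F (C :: F) 1.
Proof. by move=> atC; apply: deriv_cons (step_ATA _ atC) (deriv_nil _ _). Qed.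

Lemma qrat_derivation_resolve_unit F a b c :
  uniq [:: lvar a; lvar b; lvar c] ->
  {subset [:: [:: a; b; c]; [:: a; negl b; c]; [:: negl a; b; c]; [:: negl a; negl b; c]] <= F} ->
  qrat_derivation Q F ([:: c] :: [:: negl a; c] :: [:: a; c] :: F) 3.
Proof.
move=> abc sub.
have F1 : AT F [:: a; c].
  by apply: AT_resolvent_binary abc _ _; apply: sub; rewrite !inE eqxx ?orbT.
have F2 : AT ([:: a; c] :: F) [:: negl a; c].
  by apply: (AT_resolvent_binary (a := negl a) (b := b) abc); rewrite inE; apply/orP; right;
    apply: sub; rewrite !inE eqxx ?orbT.
have F3 : AT ([:: negl a; c] :: [:: a; c] :: F) [:: c].
  apply: (AT_resolvent_unit (a := a)); rewrite ?inE ?eqxx ?orbT //.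
  by move: abc; rewrite /= !inE !negb_or !andbT => /andP [/andP [_ ->]].
apply: deriv_cons (step_ATA _ F1) _.
apply: deriv_cons (step_ATA _ F2) _.
exact: qrat_derivation_AT F3.
Qed.

Lemma qrat_derivation_collect k F0 (Cs : cnf V) :
  (forall F C, {subset F0 <= F} -> C \in Cs ->
     exists2 F', qrat_derivation Q F F' k & {subset C :: F <= F'}) ->
  exists F, [/\ qrat_derivation Q F0 F (size Cs * k), {subset F0 <= F} & {subset Cs <= F}].
Proof.
move=> add; suff ext F : {subset F0 <= F} ->
    exists F', [/\ qrat_derivation Q F F' (size Cs * k), {subset F <= F'} & {subset Cs <= F'}].
  exact: ext.
elim: Cs add F => [|C Cs IH] add F F0F; first by exists F; split => //; apply: deriv_nil.
have [F1 d1 sub1] := add F C F0F (mem_head _ _).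
have F0F1 : {subset F0 <= F1} by move=> D /F0F DF; apply: sub1; rewrite inE DF orbT.
have [G [d2 sub2 CsG]] : exists F2,
    [/\ qrat_derivation Q F1 F2 (size Cs * k), {subset F1 <= F2} & {subset Cs <= F2}].
  by apply: IH F0F1 => G D F0G DCs; apply: add; rewrite ?inE ?DCs ?orbT.
exists G; split.
- by rewrite mulSn; apply: qrat_derivation_cat d1 d2.
- by move=> D DF; apply/sub2/sub1; rewrite inE DF orbT.
- by move=> D; rewrite inE => /orP [/eqP -> | /CsG //]; apply/sub2/sub1/mem_head.
Qed.

End Derivations.

Section UniversalReduction.
Variables (V : eqType) (Q : Defs.prefix V) (partner : lit V -> lit V).
Hypothesis partner_negl : forall l, partner (negl l) = negl (partner l).
Implicit Types (F : cnf V) (C D : clause V) (l m : lit V).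

Definition partnered D := {in D, forall l, is_univ Q (lvar l) ->
  [/\ partner l \in D, ~~ is_univ Q (lvar (partner l)) & leQ Q (partner l) l]}.

Definition strip_univ D := [seq m <- D | ~~ is_univ Q (lvar m)].

Lemma partnered_filter (p : pred (lit V)) D :
  (forall m, ~~ is_univ Q (lvar m) -> p m) -> partnered D -> partnered (filter p D).
Proof.
move=> p_exist hD l; rewrite mem_filter => /andP [pl lD] ul.
by have [pD pe pleq] := hD l lD ul; rewrite mem_filter p_exist.
Qed.

Lemma qrat_step_univ_partnered F1 C F2 l :
  {in F1 ++ C :: F2, forall D, partnered D} -> l \in C -> is_univ Q (lvar l) ->
  qrat_step Q (F1 ++ C :: F2) (F1 ++ [seq m <- C | m != l] :: F2).
Proof.
move=> hF lC ul; have CF : C \in F1 ++ C :: F2 by rewrite mem_cat mem_head orbT.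
have [pC pe pleq] := hF C CF l lC ul.
have pl : partner l != l by apply: contraNneq pe => ->.
apply: step_QRATU => //; split => // G GF nlG.
have [pG _ _] := hF G GF (negl l) nlG ul; rewrite partner_negl in pG.
apply: (@AT_tautology _ _ _ (partner l)); rewrite mem_cat mem_filter.
  by rewrite pC pl.
by apply/orP; right; rewrite mem_filter pG (inj_eq (can_inj (@neglK V))) pl andbT.
Qed.

Lemma partnered_replace F1 C C' F2 :
  {in F1 ++ C :: F2, forall D, partnered D} -> partnered C' ->
  {in F1 ++ C' :: F2, forall D, partnered D}.
Proof.
move=> hF hC' D; rewrite !mem_cat !inE => /or3P [D1 | /eqP -> | D2] //;
  by apply: hF; rewrite !mem_cat !inE ?D1 ?D2 ?orbT.
Qed.

Lemma qrat_derivation_strip_univ_clause F1 C F2 :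
  {in F1 ++ C :: F2, forall D, partnered D} ->
  exists2 k, k <= size C &
    qrat_derivation Q (F1 ++ C :: F2) (F1 ++ strip_univ C :: F2) k.
Proof.
have [s] := ubnP (size C); elim: s C => // s IH C lt_Cs hF.
have [/hasP [l lC ul] | /hasPn exC] := boolP (has (fun m => is_univ Q (lvar m)) C); last first.
  have -> : strip_univ C = C by apply/all_filterP/allP.
  by exists 0 => //; apply: deriv_nil.
have CF : C \in F1 ++ C :: F2 by rewrite mem_cat mem_head orbT.
have exist_neq_l m : ~~ is_univ Q (lvar m) -> m != l by apply: contraNneq => ->.
set C' := [seq m <- C | m != l].
have lt_C'C : size C' < size C.
  rewrite size_filter -[X in _ < X](count_predC (fun m => m != l)) -addn1 leq_add2l -has_count.
  by apply/hasP; exists l => //=; rewrite negbK.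
have strip_C' : strip_univ C' = strip_univ C.
  by rewrite /strip_univ -filter_predI; apply: eq_filter => m /=; apply/andb_idr/exist_neq_l.
have [k le_kC' d] := IH C' (leq_trans lt_C'C lt_Cs)
  (partnered_replace hF (partnered_filter exist_neq_l (hF C CF))).
exists k.+1; first exact: leq_ltn_trans le_kC' lt_C'C.
by rewrite -strip_C'; apply: deriv_cons (qrat_step_univ_partnered hF lC ul) d.
Qed.

Lemma qrat_derivation_strip_univ F :
  {in F, forall D, partnered D} ->
  exists2 k, k <= sumn (map size F) & qrat_derivation Q F (map strip_univ F) k.
Proof.
suff gen F1 : {in F1 ++ F, forall D, partnered D} ->
    exists2 k, k <= sumn (map size F) &
      qrat_derivation Q (F1 ++ F) (F1 ++ map strip_univ F) k.
  exact: (gen [::]).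
elim: F F1 => [|C F IH] F1 hF; first by exists 0 => //; apply: deriv_nil.
have [k1 le_k1 d1] := qrat_derivation_strip_univ_clause hF.
have [|k2 le_k2 d2] := IH (rcons F1 (strip_univ C)).
  rewrite cat_rcons; apply: (partnered_replace hF).
  by apply: partnered_filter (hF C _) => //; rewrite mem_cat mem_head orbT.
exists (k1 + k2); first by rewrite /= leq_add.
by rewrite !cat_rcons in d2; apply: qrat_derivation_cat d1 d2.
Qed.

End UniversalReduction.

Lemma mem_flatten_pairs (T : eqType) (f g : nat -> T) s v :
  (v \in flatten [seq [:: f k; g k] | k <- s]) = has (fun k => (v == f k) || (v == g k)) s.
Proof. by elim: s => //= k s IH; rewrite !inE IH orbA. Qed.

Lemma is_univ_EAE (V : eqType) (X Y Z : seq V) v :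
  is_univ [:: (true, X); (false, Y); (true, Z)] v = (v \notin X) && (v \in Y).
Proof. by rewrite /is_univ /bound /level /=; case: (v \in X); case: (v \in Y); case: (v \in Z). Qed.

Lemma leQ_head (V : eqType) (B : bool * seq V) (Q : Defs.prefix V) (k l : lit V) :
  lvar k \in B.2 -> bound (B :: Q) (lvar l) -> leQ (B :: Q) k l.
Proof. by move=> kB lQ; rewrite /leQ lQ /bound /level /= kB. Qed.

Section SquaredEquality.
Variable n : nat.

Lemma is_univ_Q2 v : is_univ (Q2 n) v = has (fun i => (v == vu i) || (v == vv i)) (idx n).
Proof.
rewrite is_univ_EAE !mem_flatten_pairs andb_idl // => /hasP [i _ /orP [] /eqP ->];
  by apply/hasPn.
Qed.

Lemma is_univ_Q2_vx i : is_univ (Q2 n) (vx i) = false.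
Proof. by rewrite is_univ_Q2; apply/hasPn. Qed.

Lemma is_univ_Q2_vy j : is_univ (Q2 n) (vy j) = false.
Proof. by rewrite is_univ_Q2; apply/hasPn. Qed.

Lemma is_univ_Q2_vt i j : is_univ (Q2 n) (vt i j) = false.
Proof. by rewrite is_univ_Q2; apply/hasPn. Qed.

Lemma is_univ_Q2_vu i : is_univ (Q2 n) (vu i) = (i \in idx n).
Proof.
rewrite is_univ_Q2; apply/hasP/idP => [[k kn] | ni]; last by exists i; rewrite ?eqxx.
by rewrite /vu /vv !xpair_eqE /= andbT orbF => /eqP ->.
Qed.

Lemma is_univ_Q2_vv j : is_univ (Q2 n) (vv j) = (j \in idx n).
Proof.
rewrite is_univ_Q2; apply/hasP/idP => [[k kn] | nj]; last by exists j; rewrite ?eqxx ?orbT.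
by rewrite /vu /vv !xpair_eqE /= andbT => /eqP ->.
Qed.

(* Sends u_i to x_i and v_j to y_j, keeping the polarity. *)
Definition univ_partner (m : lit eqvar) : lit eqvar := ((m.1.1.1 - 2, m.1.1.2, m.1.2), m.2).

Lemma partnered_eq2_clause i j p q : i \in idx n -> j \in idx n ->
  partnered (Q2 n) univ_partner [:: (vx i, p); (vy j, q); (vu i, p); (vv j, q); pos (vt i j)].
Proof.
move=> ni nj m; rewrite !inE.
case/orP => [/eqP -> | /orP [/eqP -> | /orP [/eqP -> | /orP [/eqP -> | /eqP ->]]]] /=;
  rewrite ?is_univ_Q2_vx ?is_univ_Q2_vy ?is_univ_Q2_vt // => univ_m;
  split; rewrite ?eqxx //; apply: leQ_head; rewrite ?mem_flatten_pairs;
  by [apply/hasP; exists i => //=; rewrite eqxx | apply/hasP; exists j => //=; rewrite eqxx orbT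
      | case/andP: univ_m].
Qed.

Lemma partnered_eq2 : {in eq2 n, forall D, partnered (Q2 n) univ_partner D}.
Proof.
move=> D; rewrite /eq2 mem_cat inE.
case/orP => [/flattenP [E /allpairsP [[i j] [/= ni nj ->]]] | /eqP ->]; last first.
  by move=> m /allpairsP [[i j] [_ _ ->]]; rewrite /= is_univ_Q2_vt.
by rewrite !inE => /or4P [] /eqP ->; apply: partnered_eq2_clause.
Qed.

Definition eq2_exist := map (strip_univ (Q2 n)) (eq2 n).

Definition eq2_units := [seq [:: pos (vt i j)] | i <- idx n, j <- idx n].

Lemma eq2_exist_core i j : i \in idx n -> j \in idx n ->
  {subset [:: [:: pos (vx i); pos (vy j); pos (vt i j)]; [:: pos (vx i); ngt (vy j); pos (vt i j)];
              [:: ngt (vx i); pos (vy j); pos (vt i j)]; [:: ngt (vx i); ngt (vy j); pos (vt i j)]]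
     <= eq2_exist}.
Proof.
move=> ni nj; have -> : [:: [:: pos (vx i); pos (vy j); pos (vt i j)];
    [:: pos (vx i); ngt (vy j); pos (vt i j)]; [:: ngt (vx i); pos (vy j); pos (vt i j)];
    [:: ngt (vx i); ngt (vy j); pos (vt i j)]] = map (strip_univ (Q2 n)) (eq2_clauses i j).
  by rewrite /= /strip_univ /= is_univ_Q2_vx is_univ_Q2_vy is_univ_Q2_vt
    is_univ_Q2_vu is_univ_Q2_vv ni nj.
move=> _ /mapP [C CE ->]; apply: map_f; rewrite mem_cat; apply/orP; left.
by apply/flattenP; exists (eq2_clauses i j) => //; apply: allpairs_f.
Qed.

Lemma qrat_derivation_eq2_unit F C : {subset eq2_exist <= F} -> C \in eq2_units ->
  exists2 F', qrat_derivation (Q2 n) F F' 3 & {subset C :: F <= F'}.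
Proof.
move=> sub /allpairsP [[i j] [/= ni nj ->]].
eexists.
  apply: (@qrat_derivation_resolve_unit _ _ _ (pos (vx i)) (pos (vy j)) (pos (vt i j))) => //.
  by move=> D /(eq2_exist_core ni nj) /sub.
by move=> D; rewrite !inE => /orP [-> | ->]; rewrite ?orbT.
Qed.

Lemma AT_eq2_empty F : {subset eq2_exist <= F} -> {subset eq2_units <= F} -> AT F [::].
Proof.
move=> sub units; set T := [seq ngt (vt i j) | i <- idx n, j <- idx n].
apply: (up_falsified (D := T)).
  have strip_T : strip_univ (Q2 n) T = T.
    by apply/all_filterP/allP => _ /allpairsP [[i j] [_ _ ->]]; rewrite /= is_univ_Q2_vt.
  by apply: sub; rewrite -strip_T; apply: map_f; rewrite mem_cat mem_head orbT.
by move=> _ /allpairsP [[i j] [ni nj ->]]; apply: units; apply: (allpairs_f _ ni nj).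
Qed.

Lemma size_eq2 : sumn (map size (eq2 n)) = 21 * n ^ 2.
Proof.
rewrite /eq2 map_cat sumn_cat map_flatten sumn_flatten !map_allpairs /=.
have /all_pred1P -> : all (pred1 20) [seq 20 | _ <- idx n, _ <- idx n].
  by apply/allP => _ /allpairsP [[i j] [_ _ ->]].
rewrite sumn_nseq !size_allpairs /idx size_iota; lia.
Qed.

End SquaredEquality.

Theorem theorem8 :
  exists (c n0 : nat), forall n : nat, n0 <= n ->
    exists k : nat, k <= c * n ^ 2 /\ qrat_refutation (Q2 n) (eq2 n) k.
Proof.
exists 25, 1 => n n_gt0.
have [k1 le_k1 strip] :=
  @qrat_derivation_strip_univ _ _ univ_partner (fun _ => erefl) _ (@partnered_eq2 n).
have [F [units subF unitsF]] :=
  qrat_derivation_collect (@qrat_derivation_eq2_unit n).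
have conflict := qrat_derivation_AT (Q2 n) (AT_eq2_empty subF unitsF).
exists (k1 + size (eq2_units n) * 3 + 1); split.
  move: le_k1; rewrite size_eq2 size_allpairs /idx size_iota; nia.
exists ([::] :: F); split; last exact: mem_head.
exact: qrat_derivation_cat (qrat_derivation_cat strip units) conflict.
Qed.
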